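(* Let $G\in C^2(\mathbb U)$ and let $\varphi$ be the trading strategy additively generated from $G$ (construction recalled in the context). For every $(k,n)\in\mathbb N^2$ and every $(t,\omega)$ with $t>0$ and $(t,\omega)\in D^{k,n}$, $$V^{\varphi}(t)=G^{k,n}(\mu_t)+EG(t)+C(t),$$ where $$EG(t):=\sum_{\ell=1}^{k-1}\Gamma^{G,\ell,N_{\tau_\ell}}(\tau_\ell)\,\sigma^{k,n}_{\ell+1,N_{\tau_{\ell+1}}}+\Gamma^{G,k,n}(t),$$ $$C(t):=\sum_{\ell=1}^{k}\Big[\sigma^{\ell,N_{\tau_\ell}}\,G^{\ell-1,N_{\tau_{\ell-1}}}(\mu_{\tau_{\ell-1}})-G^{\ell,N_{\tau_\ell}}(\mu_{\tau_{\ell-1}+})\Big]\sigma^{k,n}_{\ell+1,N_{\tau_{\ell+1}}},$$ with the conventions $\sigma^{k,n}_{k+1,N_{\tau_{k+1}}}:=1$, $N_{\tau_k}:=n$, $G^{0,N_0}:=G^0$.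
   Context: Standing setting. $(\Omega,\mathcal F,(\mathcal F_t)_{t\ge0},\mathbb P)$ is a filtered probability space satisfying the usual conditions; identities between random quantities hold almost surely. $\mathbb U:=\bigcup_{n\ge1}\mathbb R^n$. The capitalization process $S$ is a $\mathbb U$-valued progressive process with left and right limits at all times; $N:=\dim(S)$ is its dimension process, with deterministic initial dimension $N(0)=N_0\in\mathbb N$. $(\tau_k)_{k\ge0}$ is its minimal reset sequence: stopping times with $\tau_0=0$, $\tau_{k-1}\le\tau_k$, $\tau_k\to\infty$, $N(t)=N(\tau_{k-1}+)$ for $t\in(\tau_{k-1},\tau_k]$, and $S$ right-continuous on $(\tau_{k-1},\tau_k)$. For $(k,n)\in\mathbb N^2$ set $\Omega^{k,n}:=\{\tau_{k-1}<\infty,\ N(\tau_{k-1}+)=n\}$ and the $(k,n)$-dissection set $D^{k,n}:=\{(t,\omega):\omega\in\Omega^{k,n},\ \tau_{k-1}(\omega)<t\le\tau_k(\omega)\}$. Write $N_{\tau_j}:=N(\tau_j)$; thus $N_{\tau_0}=N_0$ and $N_{\tau_\ell}$ is the dimension during the $\ell$-th epoch $(\tau_{\ell-1},\tau_\ell]$. For a $\mathbb U$-valued process $X$, its integrator dissection $X^{k,n}$ is the $\mathbb R^n$-valued process equal to $X(t\wedge\tau_k)-X(\tau_{k-1}+)$ for $t>\tau_{k-1}$ on $\Omega^{k,n}$ and to $0\in\mathbb R^n$ otherwise. $S$ is a piecewise RCLL semimartingale (each $S^{k,n}$ is an $\mathbb R^n$-valued RCLL semimartingale), and on every $D^{k,n}$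 all $n$ components of $S$ are nonnegative with at least one strictly positive. Market weights: $\mu_i(0)=\mu^{(0)}_i:=S_i(0)/\sum_{j=1}^{N_0}S_j(0)$, and for $(t,\omega)\in D^{k,n}$, $\mu_i(t)=\mu^{(k,n)}_i(t):=S_i(t)/\sum_{j=1}^nS_j(t)$ (with $\mu^{(k,n)}:=0$ off $D^{k,n}$); $\mu^{k,n}$ is the integrator dissection of $\mu$; $\mu_t=\mu(t)$. A predictable $\mathbb U$-valued $H$ with $\dim H=\dim\mu$ belongs to $\mathcal L(\mu)$ if each $\mathbb R^n$-valued $H^{(k,n)}:=H\mathbb 1_{D^{k,n}}$ is $\mu^{k,n}$-integrable. For $t>\tau_{k-1}$, $I_{\mu^{k,n}}(\vartheta^{(k,n)})(t):=\int_{\tau_{k-1}+}^t\sum_{i=1}^n\vartheta^{(k,n)}_i(s)\,d\mu^{k,n}_i(s)$. Trading strategy: $\vartheta\in\mathcal L(\mu)$, with dissections $\vartheta^{(0)}$ (at time $0$) and $\vartheta^{(k,n)}$ (on $D^{k,n}$), such that on every $D^{k,n}$: (SF1) $\sum_{i=1}^n\vartheta^{(k,n)}_i(t)\mu^{(k,n)}_i(t)=\sum_{i=1}^n\vartheta^{(k,n)}_i(\tau_{k-1}+)\mu^{(k,n)}_i(\tau_{k-1}+)+I_{\mu^{k,n}}(\vartheta^{(k,n)})(t)$, and (SF2) $\sum_{i=1}^n\vartheta^{(k,n)}_i(\tau_{k-1}+)S_i(\tau_{k-1}+)=\sum_{i=1}^{N_{\tau_{k-1}}}\vartheta^{(k-1,N_{\tau_{k-1}})}_i(\tau_{k-1})S_i(\tau_{k-1})$,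 where $\vartheta^{(0,N_0)}:=\vartheta^{(0)}$. Relative wealth: $V^{\vartheta,0,N_0}(0):=\sum_{i=1}^{N_0}\vartheta^{(0)}_i\mu^{(0)}_i$, $V^{\vartheta,k,n}(t):=\sum_{i=1}^n\vartheta^{(k,n)}_i(t)\mu^{(k,n)}_i(t)$ on $D^{k,n}$; $V^\vartheta$ equals $V^{\vartheta,0,N_0}(0)$ at $t=0$ and $V^{\vartheta,k,n}(t)$ on $D^{k,n}$. Ratios: on $\Omega^{k,n}$, $\sigma^{k,n}:=\sum_{j=1}^{N_{\tau_{k-1}}}S_j(\tau_{k-1})\big/\sum_{j=1}^nS_j(\tau_{k-1}+)$, and for $1\le i\le k$, $\sigma^{k,n}_{i,N_{\tau_i}}:=\prod_{\ell=i}^k\sigma^{\ell,N_{\tau_\ell}}$ (with $N_{\tau_k}=n$). Generating functions: a piecewise function $G$ of $\mu$ is a family $G^0:\mathbb R^{N_0}\to\mathbb R$, $G^{k,n}:\mathbb R^n\to\mathbb R$, with $G(\mu_0)=G^0(\mu_0)$ and $G(\mu_t)=G^{k,n}(\mu_t)$ on $D^{k,n}$; $G\in C^2(\mathbb U)$ means every member is $C^2$. Standing normalization: $G^0(\mu_0)=1$. Gamma process: on $D^{k,n}$, $\Gamma^{G,k,n}(t):=G^{k,n}(\mu_{\tau_{k-1}+})-G^{k,n}(\mu_t)+I_{\mu^{k,n}}\big(\nabla G^{k,n}(\mu_-)\big)(t)$ (and $0$ elsewhere). Additive generation. At time $0$: $\vartheta^{(0)}:=\nabla G^0(\mu_0)$,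 $C^{G,\vartheta,0}:=\sum_{i=1}^{N_0}\vartheta^{(0)}_i\mu_i(0)-G^0(\mu_0)$, $\varphi^{(0)}_i:=\vartheta^{(0)}_i-C^{G,\vartheta,0}$. Recursively for $k=1,2,\dots$, on $D^{k,n}$: $\vartheta^{(k,n)}(t):=\nabla G^{k,n}(\mu_{t-})$; $Q^{\vartheta,\mu,k,n}(t):=\sum_{i=1}^n\vartheta^{(k,n)}_i(t)\mu^{(k,n)}_i(t-)-\sum_{i=1}^n\vartheta^{(k,n)}_i(\tau_{k-1}+)\mu^{(k,n)}_i(\tau_{k-1}+)-I_{\mu^{k,n}}(\vartheta^{(k,n)})(t-)$; $\gamma^{G,\varphi,k,n}:=V^{\varphi,k-1,N_{\tau_{k-1}}}(\tau_{k-1})\,\sigma^{k,n}-G^{k,n}(\mu_{\tau_{k-1}+})$; $\widetilde G^{k,n}:=\gamma^{G,\varphi,k,n}+G^{k,n}$; $C^{\widetilde G,\vartheta,k,n}:=\sum_{i=1}^n\vartheta^{(k,n)}_i(\tau_{k-1}+)\mu^{(k,n)}_i(\tau_{k-1}+)-\widetilde G^{k,n}(\mu_{\tau_{k-1}+})$; $\varphi^{(k,n)}_i(t):=\vartheta^{(k,n)}_i(t)-Q^{\vartheta,\mu,k,n}(t)-C^{\widetilde G,\vartheta,k,n}$. The process $\varphi$ equals $\varphi^{(0)}$ at time $0$ and $\varphi^{(k,n)}$ on each $D^{k,n}$; it is a trading strategy. *)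

(* Pathwise (fixed omega) formalization. *)
From HB Require Import structures.
From mathcomp Require Import all_boot all_order all_algebra.
From mathcomp Require Import all_classical all_reals all_analysis.
Set Implicit Arguments. Unset Strict Implicit. Unset Printing Implicit Defensive.
Import Order.TTheory GRing.Theory Num.Theory.
Import numFieldNormedType.Exports.
Local Open Scope ring_scope.
Local Open Scope classical_set_scope.

Section Defs.
Variable R : realType.

Definition vsum n (x : 'rV[R]_n) : R := \sum_(i < n) x ord0 i.
Definition dot n (x y : 'rV[R]_n) : R := \sum_(i < n) x ord0 i * y ord0 i.

Definition ebasis n (i : 'I_n) : 'rV[R]_n := \row_j (j == i)%:R.
Definition grad n (f : 'rV[R]_n -> R) (x : 'rV[R]_n) : 'rV[R]_n :=
  \row_i ('D_(ebasis i) f) x.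

Definition C2 n (f : 'rV[R]_n -> R) : Prop :=
  (forall x, differentiable f x) /\
  (forall i : 'I_n, (forall x, differentiable ('D_(ebasis i) f) x) /\
     forall j : 'I_n, continuous ('D_(ebasis j) ('D_(ebasis i) f))).

(* ---- data of one fixed path omega ----
   Nt j    : N(tau_j)  (Nt 0 = N_0; Nt k = dimension during epoch (tau_{k-1},tau_k])
   tau j   : tau_j(omega)
   S k t   : S(t) for t in (tau_{k-1},tau_k] (k >= 1);  S 0 0 = S(0)
   I k t   : I_{mu^{k,Nt k}}(grad G^{k,Nt k}(mu_-))(t) for t in epoch k
   G k n   : G^{k,n};  G 0 (Nt 0) = G^0 *)
Local Unset Implicit Arguments.
Variables (Nt : nat -> nat) (tau : nat -> R)
  (S : forall k, R -> 'rV[R]_(Nt k)) (I : nat -> R -> R)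
  (G : nat -> forall n, 'rV[R]_n -> R).
Local Set Implicit Arguments.

Definition mu k t : 'rV[R]_(Nt k) := (vsum (S k t))^-1 *: S k t.
Definition muL k t : 'rV[R]_(Nt k) := lim (mu k @ t^'-).
Definition muR k : 'rV[R]_(Nt k) := lim (mu k @ (tau k.-1)^'+).
Definition SR k : 'rV[R]_(Nt k) := lim (S k @ (tau k.-1)^'+).
Definition IL k t : R := lim (I k @ t^'-).

(* sigma^{k,N_{tau_k}} (k >= 1) and sigma^{k,n}_{i,N_{tau_i}} = prod_{l=i}^k sigma^l,
   which is 1 for i = k+1 *)
Definition sigma k : R := vsum (S k.-1 (tau k.-1)) / vsum (SR k).
Definition sigmaP i k : R := \prod_(i <= l < k.+1) sigma l.

Definition Gamma k t : R := G k _ (muR k) - G k _ (mu k t) + I k t.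

Definition theta0 : 'rV[R]_(Nt 0) := grad (G 0 (Nt 0)) (mu 0 0).
Definition C0 : R := dot theta0 (mu 0 0) - G 0 _ (mu 0 0).
Definition phi0 : 'rV[R]_(Nt 0) := theta0 - C0 *: const_mx 1.
Definition V0 : R := dot phi0 (mu 0 0).

(* epoch k >= 1, given Vprev = V^{phi,k-1,N_{tau_{k-1}}}(tau_{k-1}) *)
Definition theta k t : 'rV[R]_(Nt k) := grad (G k (Nt k)) (muL k t).
Definition thetaR k : 'rV[R]_(Nt k) := grad (G k (Nt k)) (muR k).
Definition Q k t : R := dot (theta k t) (muL k t) - dot (thetaR k) (muR k) - IL k t.
Definition gammaG k (Vprev : R) : R := Vprev * sigma k - G k _ (muR k).
Definition Gtilde_at_R k (Vprev : R) : R := gammaG k Vprev + G k _ (muR k).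
Definition Ctil k (Vprev : R) : R := dot (thetaR k) (muR k) - Gtilde_at_R k Vprev.
Definition phik k (Vprev : R) t : 'rV[R]_(Nt k) :=
  theta k t - (Q k t + Ctil k Vprev) *: const_mx 1.
Definition Vk k (Vprev : R) t : R := dot (phik k Vprev t) (mu k t).

Fixpoint Vtau j : R :=
  match j with 0 => V0 | j'.+1 => Vk j'.+1 (Vtau j') (tau j'.+1) end.

Definition Vphi k t : R := Vk k (Vtau k.-1) t.

Definition EG k t : R :=
  \sum_(1 <= l < k) Gamma l (tau l) * sigmaP l.+1 k + Gamma k t.
Definition Cterm k : R :=
  \sum_(1 <= l < k.+1)
     (sigma l * G l.-1 _ (mu l.-1 (tau l.-1)) - G l _ (muR l)) * sigmaP l.+1 k.

End Defs.

From HB Require Import structures.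
From mathcomp Require Import all_boot all_order all_algebra.
From mathcomp Require Import all_classical all_reals all_analysis.
From mathcomp Require Import ring.
Import Order.TTheory GRing.Theory Num.Theory.
Import numFieldNormedType.Exports.
Local Open Scope ring_scope.
Local Open Scope classical_set_scope.

(* On an epoch the correction terms Q and C of the additive generation cancel
   everything but the stochastic integral, so V(t) = I_k(t) + sigma_k V(tau_{k-1}):
   the wealth carried over a reset is rescaled by sigma_k.  Writing I_k through
   Gamma, the quantity W_j = V(tau_j) - G^j(mu_{tau_j}) obeys the affine recurrence
   W_j = sigma_j W_{j-1} + c_j with W_0 = 0, whose solution is the
   sigma-product-weighted sum of the c_j; the c_j split into the Gamma part (EG)
   and the reset part (C). *)

Section ProductWeightedSums.
Variables (R : comPzRingType) (a : nat -> R).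

Lemma sum_prod_weighted_shift (c : nat -> R) m :
  \sum_(1 <= l < m.+1) c l * \prod_(l.+1 <= i < m.+2) a i =
  a m.+1 * \sum_(1 <= l < m.+1) c l * \prod_(l.+1 <= i < m.+1) a i.
Proof.
rewrite mulr_sumr; apply: eq_big_nat => l /andP[_ lm].
by rewrite big_nat_recr //= mulrA mulrC.
Qed.

Lemma sum_prod_weighted_recr (c : nat -> R) m :
  \sum_(1 <= l < m.+2) c l * \prod_(l.+1 <= i < m.+2) a i =
  a m.+1 * \sum_(1 <= l < m.+1) c l * \prod_(l.+1 <= i < m.+1) a i + c m.+1.
Proof. by rewrite big_nat_recr //= sum_prod_weighted_shift big_geq ?mulr1. Qed.

Lemma affine_recurrence_solution (w c : nat -> R) m :
  w 0 = 0 -> (forall j, (j < m)%N -> w j.+1 = a j.+1 * w j + c j.+1) ->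
  w m = \sum_(1 <= l < m.+1) c l * \prod_(l.+1 <= i < m.+1) a i.
Proof.
move=> w0; elim: m => [|m IH] wS; first by rewrite w0 big_geq.
rewrite wS // IH ?sum_prod_weighted_recr // => j jm.
by rewrite wS // ltnW.
Qed.

End ProductWeightedSums.

Section RowVectors.
Variable R : realType.

Lemma vsumZ n c (x : 'rV[R]_n) : vsum (c *: x) = c * vsum x.
Proof. by rewrite /vsum mulr_sumr; apply: eq_bigr => i _; rewrite mxE. Qed.

Lemma vsum_normalize n (x : 'rV[R]_n) : vsum x != 0 -> vsum ((vsum x)^-1 *: x) = 1.
Proof. by move=> x0; rewrite vsumZ mulVf. Qed.

Lemma vsum_gt0 n (x : 'rV[R]_n) :
  (forall i, 0 <= x ord0 i) -> (exists i, 0 < x ord0 i) -> 0 < vsum x.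
Proof.
move=> x_ge0 [i xi_gt0]; rewrite /vsum (bigD1 i) //=.
by apply: (lt_le_trans xi_gt0); rewrite lerDl sumr_ge0.
Qed.

Lemma dotBl n (x y z : 'rV[R]_n) : dot (x - y) z = dot x z - dot y z.
Proof. by rewrite /dot -sumrB; apply: eq_bigr => i _; rewrite !mxE mulrBl. Qed.

Lemma dotBr n (x y z : 'rV[R]_n) : dot x (y - z) = dot x y - dot x z.
Proof. by rewrite /dot -sumrB; apply: eq_bigr => i _; rewrite !mxE mulrBr. Qed.

Lemma dotZl n c (x y : 'rV[R]_n) : dot (c *: x) y = c * dot x y.
Proof. by rewrite /dot mulr_sumr; apply: eq_bigr => i _; rewrite mxE mulrA. Qed.

Lemma dot1l n (y : 'rV[R]_n) : dot (const_mx 1) y = vsum y.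
Proof. by apply: eq_bigr => i _; rewrite mxE mul1r. Qed.

End RowVectors.

Section GeneratedWealth.
Variables (R : realType) (Nt : nat -> nat) (tau : nat -> R)
  (S : forall k, R -> 'rV[R]_(Nt k)) (I : nat -> R -> R)
  (G : nat -> forall n, 'rV[R]_n -> R).

Lemma dot_const_mu k t : vsum (S k t) != 0 ->
  dot (const_mx 1) (mu S k t) = 1.
Proof. by move=> S0; rewrite dot1l vsum_normalize. Qed.

Lemma V0_generating : vsum (S 0 0) != 0 -> V0 S G = G 0 _ (mu S 0 0).
Proof.
move=> S0; rewrite /V0 /phi0 dotBl dotZl dot_const_mu // /C0; ring.
Qed.

Lemma Vk_generating j Vprev t : vsum (S j t) != 0 ->
  I j t = IL I j t + dot (theta S G j t) (mu S j t - muL S j t) ->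
  Vk tau S I G j Vprev t =
  G j _ (mu S j t) + Gamma tau S I G j t + (sigma tau S j * Vprev - G j _ (muR tau S j)).
Proof.
move=> S0 I_jump; rewrite /Vk /phik dotBl dotZl dot_const_mu // /Gamma I_jump dotBr.
rewrite /Q /Ctil /Gtilde_at_R /gammaG; ring.
Qed.

Lemma Cterm_recr m :
  Cterm tau S G m.+1 = sigma tau S m.+1 * Cterm tau S G m
    + (sigma tau S m.+1 * G m _ (mu S m (tau m)) - G m.+1 _ (muR tau S m.+1)).
Proof. exact: sum_prod_weighted_recr. Qed.

End GeneratedWealth.

Theorem theorem3p4 (R : realType) (Nt : nat -> nat) (tau : nat -> R)
  (S : forall k, R -> 'rV[R]_(Nt k)) (I : nat -> R -> R)
  (G : nat -> forall n, 'rV[R]_n -> R) (k : nat) (t : R) :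
  (* G in C^2(U), normalization G^0(mu_0) = 1 *)
  (forall j n, C2 (G j n)) ->
  G 0 (Nt 0) (mu S 0 0) = 1 ->
  (* reset times of the path (finite up to index k), tau_0 = 0 *)
  tau 0 = 0 ->
  (forall j, (1 <= j <= k)%N -> tau j.-1 < tau j) ->
  (* weights at time 0 well defined *)
  vsum (S 0 0) != 0 ->
  (* on each dissection set: nonnegative components, at least one positive *)
  (forall j s, (1 <= j <= k)%N -> tau j.-1 < s <= tau j ->
     (forall i, 0 <= S j s ord0 i) /\ exists i, 0 < S j s ord0 i) ->
  (* path regularity of S on each epoch: right limit at tau_{j-1},
     left limits, right-continuity inside the epoch *)
  (forall j, (1 <= j <= k)%N -> cvg (S j @ (tau j.-1)^'+)) ->
  (forall j, (1 <= j <= k)%N -> 0 < vsum (SR tau S j)) ->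
  (forall j s, (1 <= j <= k)%N -> tau j.-1 < s <= tau j -> cvg (S j @ s^'-)) ->
  (forall j s, (1 <= j <= k)%N -> tau j.-1 < s < tau j ->
     S j x @[x --> s^'+] --> S j s) ->
  (* I j is the stochastic integral process of grad G^{j}(mu_-) against mu^{j,Nt j}:
     it starts at 0 at tau_{j-1}+, has left limits, and its jumps are
     grad G^j(mu(s-)) . (mu(s) - mu(s-)) *)
  (forall j, (1 <= j <= k)%N -> I j x @[x --> (tau j.-1)^'+] --> 0) ->
  (forall j s, (1 <= j <= k)%N -> tau j.-1 < s <= tau j -> cvg (I j @ s^'-)) ->
  (forall j s, (1 <= j <= k)%N -> tau j.-1 < s <= tau j ->
     I j s = IL I j s + dot (theta S G j s) (mu S j s - muL S j s)) ->
  (* the statement: (t, omega) in D^{k, Nt k}, t > 0 *)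
  (1 <= k)%N -> 0 < t -> tau k.-1 < t <= tau k ->
  Vphi tau S I G k t = G k (Nt k) (mu S k t) + EG tau S I G k t + Cterm tau S G k.
Proof.
move=> _ _ tau0 tau_incr S00 S_pos _ _ _ _ _ _ I_jump.
case: k tau_incr S_pos I_jump => // m tau_incr S_pos I_jump _ _ t_epoch.
have epoch_wealth j Vprev s : (j < m.+1)%N -> tau j < s <= tau j.+1 ->
    Vk tau S I G j.+1 Vprev s = G j.+1 _ (mu S j.+1 s) + Gamma tau S I G j.+1 s
      + (sigma tau S j.+1 * Vprev - G j.+1 _ (muR tau S j.+1)).
  move=> jm s_epoch; have [S_ge0 S_gt0] := S_pos j.+1 s jm s_epoch.
  by apply: Vk_generating; [rewrite gt_eqF // vsum_gt0 | exact: (I_jump j.+1)].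
pose c l := (sigma tau S l * G l.-1 _ (mu S l.-1 (tau l.-1)) - G l _ (muR tau S l))
  + Gamma tau S I G l (tau l).
have Vtau_m : Vtau tau S I G m - G m _ (mu S m (tau m)) =
    \sum_(1 <= l < m.+1) c l * sigmaP tau S l.+1 m.
  apply: (@affine_recurrence_solution _ _ (fun j => Vtau tau S I G j - G j _ (mu S j (tau j)))).
    by rewrite /= V0_generating // tau0 subrr.
  move=> j /ltnW jm; rewrite /= epoch_wealth //; last by rewrite lexx andbT (tau_incr j.+1).
  rewrite /c /=; ring.
move: Vtau_m; under eq_bigr do rewrite mulrDl; rewrite big_split /= -/(Cterm tau S G m).
move/eqP; rewrite subr_eq => /eqP Vtau_m.
rewrite /Vphi /= epoch_wealth // Vtau_m /EG sum_prod_weighted_shift Cterm_recr; ring.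
Qed.
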